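(* Let $W_1,\dots,W_n$ be proper subspaces of $\mathbb R^d$ with orthogonal projections $P_1,\dots,P_n$, and suppose there exist scalars $a_1,\dots,a_n\in\mathbb R$ and $A>0$ such that $\sum_{i=1}^n a_i^2P_i=A\cdot I$. Then both $\{W_i\}_{i=1}^n$ and $\{W_i^\perp\}_{i=1}^n$ do norm retrieval on $\mathbb R^d$.
   Context: A family of subspaces $\{V_i\}_{i=1}^n$ of $\mathbb R^d$ with orthogonal projections $\{Q_i\}$ does norm retrieval if whenever $x,y\in\mathbb R^d$ satisfy $\|Q_ix\|=\|Q_iy\|$ for all $i$, then $\|x\|=\|y\|$. *)

(* Vectors of R^d are row vectors 'rV[R]_d; a subspace of R^d
   is represented by a matrix 'M[R]_d whose row space (mxalgebra) is the subspace. *)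
From HB Require Import structures.
From mathcomp Require Import all_boot all_order all_algebra.
Set Implicit Arguments. Unset Strict Implicit. Unset Printing Implicit Defensive.
Import Order.TTheory GRing.Theory Num.Theory.
Local Open Scope ring_scope.

Definition vnorm (R : rcfType) (d : nat) (x : 'rV[R]_d) : R :=
  Num.sqrt (\sum_(j < d) x 0 j ^+ 2).

Definition is_orth_proj (R : rcfType) (d : nat) (W P : 'M[R]_d) : Prop :=
  P *m P = P /\ P^T = P /\ (P == W)%MS.

Definition orthc (R : rcfType) (d : nat) (W : 'M[R]_d) : 'M[R]_d :=
  kermx W^T.

Definition norm_retrieval (R : rcfType) (d n : nat) (V : 'I_n -> 'M[R]_d) : Prop :=
  forall Q : 'I_n -> 'M[R]_d, (forall i, is_orth_proj (V i) (Q i)) ->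
  forall x y : 'rV[R]_d,
    (forall i, vnorm (x *m Q i) = vnorm (y *m Q i)) -> vnorm x = vnorm y.

(* Since each P_i is a symmetric idempotent, |x P_i|^2 = <x P_i, x>, so applying
   the quadratic form of x to sum_i a_i^2 P_i = A I gives
   A |x|^2 = sum_i a_i^2 |x P_i|^2, and |x| is determined by the |x P_i|.
   The complementary projections I - P_i satisfy
   sum_i a_i^2 (I - P_i) = (sum_i a_i^2 - A) I, and the constant is nonzero:
   otherwise every P_i with a_i <> 0 would be the identity, so W_i = R^d. *)
From HB Require Import structures.
From mathcomp Require Import all_boot all_order all_algebra.
From mathcomp Require Import all_reals.
Import Order.TTheory GRing.Theory Num.Theory.
Local Open Scope ring_scope.
Set Implicit Arguments. Unset Strict Implicit.

Section NormRetrieval.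
Variables (R : rcfType) (d : nat).
Implicit Types (x y : 'rV[R]_d) (W P Q : 'M[R]_d).

Definition sqnorm x : R := \sum_(j < d) x 0 j ^+ 2.

Lemma sqnormE x : sqnorm x = (x *m x^T) 0 0.
Proof. by rewrite mxE; apply: eq_bigr => j _; rewrite !mxE expr2. Qed.

Lemma sqnorm_ge0 x : 0 <= sqnorm x.
Proof. by apply: sumr_ge0 => j _; apply: sqr_ge0. Qed.

Lemma sqnorm_eq0 x : sqnorm x = 0 -> x = 0.
Proof.
move=> x0; apply/rowP => j; rewrite mxE.
by apply/eqP; rewrite -sqrf_eq0; apply/eqP/(psumr_eq0P _ x0) => // k _; apply: sqr_ge0.
Qed.

Lemma vnorm_eqE x y : (vnorm x = vnorm y) <-> (sqnorm x = sqnorm y).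
Proof.
rewrite /vnorm -!/(sqnorm _); split=> [/eqP|-> //].
by rewrite eqr_sqrt ?sqnorm_ge0 // => /eqP.
Qed.

Lemma sqnorm_mul_orth_proj W P x :
  is_orth_proj W P -> sqnorm (x *m P) = (x *m P *m x^T) 0 0.
Proof. by case=> PP [PT _]; rewrite sqnormE trmx_mul PT mulmxA -(mulmxA x) PP. Qed.

Lemma orth_proj_uniq W P Q : is_orth_proj W P -> is_orth_proj W Q -> Q = P.
Proof.
move=> [PP [PT /andP[PW WP]]] [QQ [QT /andP[QW WQ]]].
have QP : Q *m P = Q.
  by case/submxP: (submx_trans QW WP) => D ->; rewrite -mulmxA PP.
have PQ : P *m Q = P.
  by case/submxP: (submx_trans PW WQ) => D ->; rewrite -mulmxA QQ.
by rewrite -[LHS]QT -QP trmx_mul PT QT PQ.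
Qed.

Lemma orth_proj_orthc W P : is_orth_proj W P -> is_orth_proj (orthc W) (1%:M - P).
Proof.
move=> [PP [PT /andP[PW WP]]].
have PWT : P *m W^T = W^T.
  by case/submxP: WP => Z ->; rewrite trmx_mul mulmxA PT PP.
have WTP : forall m (u : 'M[R]_(m, d)), u *m W^T = 0 -> u *m P = 0.
  by move=> m u uW; rewrite -PT; case/submxP: PW => Y ->; rewrite trmx_mul mulmxA uW mul0mx.
split; first by rewrite mulmxBl mul1mx mulmxBr mulmx1 PP subrr subr0.
split; first by rewrite linearB /= trmx1 PT.
apply/andP; split; first by apply/sub_kermxP; rewrite mulmxBl mul1mx PWT subrr.
have KP : kermx W^T *m (1%:M - P) = kermx W^T.
  by rewrite mulmxBr mulmx1 WTP ?mulmx_ker ?subr0.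
by rewrite -[X in (X <= _)%MS]KP submxMl.
Qed.

Lemma sqnorm_sum_orth_proj n (V P : 'I_n -> 'M[R]_d) (c : 'I_n -> R) (B : R) :
    (forall i, is_orth_proj (V i) (P i)) -> \sum_i c i *: P i = B%:M ->
  forall x, B * sqnorm x = \sum_i c i * sqnorm (x *m P i).
Proof.
move=> hP hsum x.
have -> : B * sqnorm x = (x *m B%:M *m x^T) 0 0.
  by rewrite mul_mx_scalar -scalemxAl mxE sqnormE.
rewrite -hsum mulmx_sumr mulmx_suml summxE; apply: eq_bigr => i _.
by rewrite -scalemxAr -scalemxAl mxE (sqnorm_mul_orth_proj _ (hP i)).
Qed.

Lemma norm_retrieval_of_sum_orth_proj n (V P : 'I_n -> 'M[R]_d) (c : 'I_n -> R) (B : R) :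
    (forall i, is_orth_proj (V i) (P i)) -> \sum_i c i *: P i = B%:M -> B != 0 ->
  norm_retrieval V.
Proof.
move=> hP hsum B0 Q hQ x y hxy; apply/vnorm_eqE/(mulfI B0).
rewrite !(sqnorm_sum_orth_proj hP hsum); apply: eq_bigr => i _.
by rewrite -(orth_proj_uniq (hP i) (hQ i)); congr (_ * _); apply/vnorm_eqE.
Qed.

Lemma sum_sqr_scale_orth_proj_eq0 n (V P : 'I_n -> 'M[R]_d) (c : 'I_n -> R) :
    (forall i, is_orth_proj (V i) (P i)) -> \sum_i c i ^+ 2 *: P i = 0 ->
  forall i, c i != 0 -> P i = 0.
Proof.
move=> hP hsum i ci.
have hsum0 : \sum_i c i ^+ 2 *: P i = 0%:M by rewrite hsum raddf0.
have xP0 x : x *m P i = 0.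
  have := sqnorm_sum_orth_proj hP hsum0 x.
  rewrite mul0r => /esym sum0; apply: sqnorm_eq0.
  have terms_ge0 j : true -> 0 <= c j ^+ 2 * sqnorm (x *m P j).
    by rewrite mulr_ge0 ?sqr_ge0 ?sqnorm_ge0.
  have /eqP := psumr_eq0P terms_ge0 sum0 (i:=i) isT.
  by rewrite mulf_eq0 sqrf_eq0 (negbTE ci) => /eqP.
by apply/row_matrixP => k; rewrite row0 rowE xP0.
Qed.

Lemma sum_scale_subr1 n (c : 'I_n -> R) (P : 'I_n -> 'M[R]_d) :
  \sum_i c i *: (1%:M - P i) = (\sum_i c i)%:M - \sum_i c i *: P i.
Proof.
rewrite raddf_sum -sumrB; apply: eq_bigr => i _.
by rewrite scalerBr scalemx1.
Qed.

Lemma sum_sqr_sub_neq0 n (W P : 'I_n -> 'M[R]_d) (a : 'I_n -> R) (A : R) :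
    (forall i, is_orth_proj (W i) (P i)) -> (forall i, (\rank (W i) < d)%N) ->
    0 < A -> \sum_i a i ^+ 2 *: P i = A%:M ->
  \sum_i a i ^+ 2 - A != 0.
Proof.
move=> hP hproper hA hsum; apply/eqP => /subr0_eq SA.
have [i /andP[_ ai]] : exists i, true && (0 < a i ^+ 2).
  by apply: psumr_neq0P => [i _|]; [apply: sqr_ge0 | rewrite SA; apply/eqP/lt0r_neq0].
have hsumc0 : \sum_i a i ^+ 2 *: (1%:M - P i) = 0.
  by rewrite sum_scale_subr1 hsum SA subrr.
have P1 : 1%:M = P i.
  apply/eqP; rewrite -subr_eq0; apply/eqP.
  apply: (sum_sqr_scale_orth_proj_eq0 (fun i => orth_proj_orthc (hP i)) hsumc0).
  by rewrite -sqrf_eq0 lt0r_neq0.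
by have := hproper i; rewrite -(eqmx_rank (hP i).2.2) -P1 mxrank1 ltnn.
Qed.

End NormRetrieval.

Theorem mainTheorem2 (R : realType) (d n : nat)
  (W P : 'I_n -> 'M[R]_d)
  (hP : forall i, is_orth_proj (W i) (P i))
  (hproper : forall i, (\rank (W i) < d)%N)
  (a : 'I_n -> R) (A : R) (hA : 0 < A)
  (hsum : \sum_(i < n) (a i ^+ 2) *: P i = A%:M) :
  norm_retrieval W /\ norm_retrieval (fun i => orthc (W i)).
Proof.
have hsumc : \sum_i a i ^+ 2 *: (1%:M - P i) = (\sum_i a i ^+ 2 - A)%:M.
  by rewrite sum_scale_subr1 hsum raddfB.
split; first exact: norm_retrieval_of_sum_orth_proj hP hsum (lt0r_neq0 hA).
apply: (norm_retrieval_of_sum_orth_proj (fun i => orth_proj_orthc (hP i)) hsumc).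
exact: sum_sqr_sub_neq0 hP hproper hA hsum.
Qed.
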